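(* Let $G=(V,E)$ be a finite connected graph with boundary $\partial G\subset V$, let $\alpha\in\Pi(\partial G)$, $p\in[0,1]$, $q>0$. Let $\widetilde E\subset E$ be such that for every $e\in\widetilde E$ there exists a path in $G\cup\alpha$ connecting the two endpoints of $e$ and using only edges of $E\setminus\widetilde E$. Let $\Gamma_{\widetilde E}(e)$ be the collection of such paths, and for $e\in\widetilde E$ set \[\widetilde\varepsilon_e:=|p'-p|\;\mathbb P^G_{\min(p,p')}\big(\exists\gamma\in\Gamma_{\widetilde E}(e)\text{ such that all edges of }\gamma\text{ are open}\big).\] Then: (1) if $p<p'$, then $\phi^\alpha_{G,p,q}\preceq\mathbb P^G_{(p'-\widetilde\varepsilon_e\mathbf 1_{e\in\widetilde E})_e}$; (2) if $p>p'$, then $\mathbb P^G_{(p'+\widetilde\varepsilon_e\mathbf 1_{e\in\widetilde E})_e}\preceq\phi^\alpha_{G,p,q}$.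
   Context: Configurations are $\omega\in\{0,1\}^E$; an edge $e$ is open if $\omega(e)=1$, closed otherwise. $\Pi(\partial G)$ denotes the set of partitions of $\partial G$; vertices in the same block of $\alpha$ are called wired. $G\cup\alpha$ is the (multi)graph obtained from $G$ by identifying wired vertices. $k(\omega,\alpha)$ is the number of connected components of the graph with vertex set $V$ and edge set the open edges of $\omega$, after identifying wired vertices. The FK measure is $\phi^\alpha_{G,p,q}(\omega)=Z^{-1}\big(\prod_{e\in E}p^{\omega(e)}(1-p)^{1-\omega(e)}\big)q^{k(\omega,\alpha)}$. Set $p':=\frac{p}{p+q(1-p)}$. $\mathbb P^G_{(p_e)}$ is the product measure on $\{0,1\}^E$ where edge $e$ is open independently with probability $p_e$ ($\mathbb P^G_s$ when $p_e\equiv s$). $\mu\preceq\mu'$ means $\mu(A)\le\mu'(A)$ for all increasing events $A$. *)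

From HB Require Import structures.
From mathcomp Require Import all_boot all_order all_algebra.
Set Implicit Arguments. Unset Strict Implicit. Unset Printing Implicit Defensive.
Import Order.TTheory GRing.Theory Num.Theory.
Local Open Scope ring_scope.

(* A finite (multi)graph: vertex type V, edge type E, endpoints [ends e].
   Configurations are finite functions E -> bool (true = open). *)

Section FK.
Variables (V E : finType) (ends : E -> V * V).

Definition joins (e : E) (x y : V) : bool :=
  (((ends e).1 == x) && ((ends e).2 == y)) || (((ends e).1 == y) && ((ends e).2 == x)).

Definition adj : rel V := fun x y => [exists e, joins e x y].

Definition graph_connected : Prop := forall x y : V, connect adj x y.

Definition wired (alpha : {set {set V}}) (x y : V) : bool :=
  [exists A in alpha, (x \in A) && (y \in A)].

(* x and y are the same vertex of G ∪ alpha *)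
Definition same_vertex (alpha : {set {set V}}) (x y : V) : bool :=
  (x == y) || wired alpha x y.

Definition open_rel (alpha : {set {set V}}) (w : {ffun E -> bool}) : rel V :=
  fun x y => [exists e, w e && joins e x y] || wired alpha x y.

Definition kcomp (alpha : {set {set V}}) (w : {ffun E -> bool}) : nat :=
  #|[set [set y | connect (open_rel alpha w) x y] | x : V]|.

(* s is (the edge sequence of) a path in G ∪ alpha from x to y *)
Fixpoint walk (alpha : {set {set V}}) (x y : V) (s : seq E) : bool :=
  match s with
  | [::] => same_vertex alpha x y
  | e :: s' => (same_vertex alpha x (ends e).1 && walk alpha (ends e).2 y s')
            || (same_vertex alpha x (ends e).2 && walk alpha (ends e).1 y s')
  end.

Definition in_Gamma (alpha : {set {set V}}) (Et : {set E}) (e : E) (s : seq E) : bool :=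
  walk alpha (ends e).1 (ends e).2 s && all (fun f => f \notin Et) s.

(* event {exists γ ∈ Γ_{Et}(e) with all edges open}; paths restricted to
   edge-simple ones (which is no loss for existence) so the event is decidable *)
Definition Gamma_open_event (alpha : {set {set V}}) (Et : {set E}) (e : E)
  : {set {ffun E -> bool}} :=
  [set w : {ffun E -> bool} | [exists n : 'I_(#|E|).+1, exists t : n.-tuple E,
              [&& uniq t, in_Gamma alpha Et e t & all (fun f => w f) t]]].

Variable R : realFieldType.

Definition edge_weight (pe : E -> R) (w : {ffun E -> bool}) : R :=
  \prod_(e : E) (if w e then pe e else 1 - pe e).

Definition prodP (pe : E -> R) (A : {set {ffun E -> bool}}) : R :=
  \sum_(w in A) edge_weight pe w.

Definition FK_weight (alpha : {set {set V}}) (p q : R) (w : {ffun E -> bool}) : R :=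
  edge_weight (fun _ => p) w * q ^+ kcomp alpha w.

Definition FK (alpha : {set {set V}}) (p q : R) (A : {set {ffun E -> bool}}) : R :=
  (\sum_(w in A) FK_weight alpha p q w) / (\sum_(w : {ffun E -> bool}) FK_weight alpha p q w).

Definition increasing (A : {set {ffun E -> bool}}) : Prop :=
  forall w w' : {ffun E -> bool}, w \in A -> (forall e, w e ==> w' e) -> w' \in A.

Definition dominated (mu nu : {set {ffun E -> bool}} -> R) : Prop :=
  forall A, increasing A -> mu A <= nu A.

Definition eps_tilde (alpha : {set {set V}}) (Et : {set E}) (p p' : R) (e : E) : R :=
  `|p' - p| * prodP (fun _ => Num.min p p') (Gamma_open_event alpha Et e).

End FK.

Definition pprime (R : realFieldType) (p q : R) : R := p / (p + q * (1 - p)).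

From HB Require Import structures.
From mathcomp Require Import all_boot all_order all_algebra.
From mathcomp Require Import ring lra.
Import Order.TTheory GRing.Theory Num.Theory.
Set Implicit Arguments. Unset Strict Implicit. Unset Printing Implicit Defensive.

(* Closing an edge e changes the number of clusters by at most one, so under
   phi = phi^alpha_{G,p,q} the conditional probability that e is open, given all
   other edges, is p when the endpoints of e are joined without e and p' otherwise.
   It thus always lies between p and p', and equals p on the event A_e that some
   path of Gamma(e) is open.  A sequential coupling compares phi with a product
   measure edge by edge: it suffices that, for an enumeration of the edges, each
   edge is open with conditional probability at most (resp. at least) its product
   rate given the edges enumerated before it.  Enumerate the edges of E~ first.
   For e in E~ the edges outside E~ are then not yet conditioned upon; as A_e is
   increasing and only depends on them, and their conditional law dominates the
   product measure of parameter min(p,p'), the conditional probability of A_e is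
   at least P_min(p,p')(A_e), which yields the rates p' -+ eps~_e. *)

(** * Counting connected components *)

Section Components.
Variable V : finType.
Implicit Types (rr : rel V) (a b x y : V).

Definition component rr x : {set V} := [set y | connect rr x y].

Definition ncomp rr : nat := #|[set component rr x | x : V]|.

Definition saturate rr (C : {set V}) : {set V} := \bigcup_(x in C) component rr x.

Lemma component_eq rr x y : symmetric rr -> connect rr x y -> component rr x = component rr y.
Proof.
move=> /sym_connect_sym cs cxy; apply/setP => z; rewrite !inE.
by apply/idP/idP => H; [apply: connect_trans H; rewrite cs | exact: connect_trans cxy H].
Qed.

Lemma saturate_component r0 r1 x : subrel r0 r1 -> saturate r1 (component r0 x) = component r1 x.
Proof.
move=> sub; apply/setP => z; apply/bigcupP/idP => [[y]|H]; last by exists x; rewrite // inE connect0.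
rewrite !inE => c0 c1; apply: connect_trans c1.
by apply: connect_sub c0 => u v /sub; apply: connect1.
Qed.

Lemma components_subrel r0 r1 : subrel r0 r1 ->
  [set component r1 x | x : V] = saturate r1 @: [set component r0 x | x : V].
Proof. by move=> sub; rewrite -imset_comp; apply: eq_imset => x /=; rewrite saturate_component. Qed.

Lemma ncomp_subrel r0 r1 : subrel r0 r1 -> ncomp r1 <= ncomp r0.
Proof. by move=> sub; rewrite /ncomp (components_subrel sub) leq_imset_card. Qed.

Lemma ncomp_eq r0 r1 : connect r0 =2 connect r1 -> ncomp r0 = ncomp r1.
Proof.
move=> H; rewrite /ncomp (@eq_imset _ _ (component r0) (component r1)) // => x.
by apply/setP => y; rewrite !inE H.
Qed.

Definition adds_edge (r0 r1 : rel V) a b : Prop :=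
  forall x y, r1 x y -> [|| r0 x y, (x == a) && (y == b) | (x == b) && (y == a)].

Lemma connect_adds_edge r0 r1 a b x y : symmetric r0 -> adds_edge r0 r1 a b ->
  connect r1 x y -> connect r0 x y \/
    ((connect r0 x a || connect r0 x b) && (connect r0 y a || connect r0 y b)).
Proof.
move=> /sym_connect_sym cs split /connectP [pth pthP ->] {y}.
elim: pth x pthP => [|z pth IH] x /=; first by left; exact: connect0.
move=> /andP [rxz pthP]; have := IH z pthP; set y := last z pth.
have [H|H] : connect r0 x z \/ ((x == a) && (z == b) || (x == b) && (z == a)).
  by case/or3P: (split _ _ rxz) => H; [left; apply: connect1 | right; rewrite H | right; rewrite H orbT].
- case=> [c|/andP [A B]]; first by left; exact: connect_trans H c.
  right; rewrite B andbT; case/orP: A => A.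
  + by rewrite (connect_trans H A).
  + by rewrite (connect_trans H A) orbT.
- case/orP: H => /andP [/eqP xa /eqP zb]; subst x z.
  + case=> [c|/andP [A B]]; right; last by rewrite connect0 B.
    by rewrite connect0 /= (cs y b) c orbT.
  + case=> [c|/andP [A B]]; right; last by rewrite connect0 orbT B.
    by rewrite connect0 orbT /= (cs y a) c.
Qed.

(* Adding an edge merges at most two components: outside the component of [b],
   saturation under [r1] is injective on the components of [r0]. *)
Lemma ncomp_adds_edge r0 r1 a b : symmetric r0 -> subrel r0 r1 -> adds_edge r0 r1 a b ->
  ncomp r0 <= (ncomp r1).+1.
Proof.
move=> s0 sub split; have cs := sym_connect_sym s0.
rewrite /ncomp (components_subrel sub).
set S0 := [set component r0 x | x : V].
have hb : component r0 b \in S0 by apply/imsetP; exists b.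
rewrite (cardsD1 (component r0 b) S0) hb add1n ltnS.
have inj : {in S0 :\ component r0 b &, injective (saturate r1)}.
  move=> C1 C2 /setD1P [n1 /imsetP [x _ E1]] /setD1P [n2 /imsetP [y _ E2]]; subst C1 C2.
  rewrite !saturate_component // => e1.
  have : y \in component r1 x by rewrite e1 inE connect0.
  rewrite inE => cxy.
  case: (connect_adds_edge s0 split cxy) => [c|/andP [A B]]; first exact: component_eq.
  have nb u : component r0 u != component r0 b -> ~~ connect r0 u b.
    by move=> nu; apply: contra nu => c; apply/eqP/component_eq.
  move: A B; rewrite (negbTE (nb _ n1)) (negbTE (nb _ n2)) !orbF => A B.
  by apply: component_eq => //; apply: connect_trans A _; rewrite cs.
rewrite -(card_in_imset inj); apply: subset_leq_card; apply: imsetS; exact: subsetDl.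
Qed.

End Components.

Local Open Scope ring_scope.

(** * Resampling edges *)

Section Resampling.
Variables (E : finType) (R : realFieldType).
Local Notation cfg := {ffun E -> bool}.
Implicit Types (w x : cfg) (s : seq E) (e f : E) (b c : bool) (r : E -> R).

Definition set_edge (w : cfg) (e : E) (b : bool) : cfg :=
  [ffun f => if f == e then b else w f].

Definition agree_off (s : seq E) (w x : cfg) : bool :=
  [forall f, (f \notin s) ==> (w f == x f)].

Definition edge_factor (r : E -> R) (f : E) (b : bool) : R :=
  if b then r f else 1 - r f.

(* [resample r s F w] is the expectation of [F] when the edges of [s] are
   redrawn independently, [f] open with probability [r f], and the other
   edges are kept as in [w]. *)
Fixpoint resample (r : E -> R) (s : seq E) (F : cfg -> R) (w : cfg) : R :=
  if s is e :: s' then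
    r e * resample r s' F (set_edge w e true)
      + (1 - r e) * resample r s' F (set_edge w e false)
  else F w.

Definition expectation (r : E -> R) (F : cfg -> R) : R :=
  \sum_(x : cfg) edge_weight r x * F x.

Definition indicator (A : {set cfg}) (x : cfg) : R := (x \in A)%:R.

Definition marginal (W : cfg -> R) (e : E) (x : cfg) : R :=
  W (set_edge x e true) + W (set_edge x e false).

Definition monotone (F : cfg -> R) : Prop :=
  forall w w' : cfg, (forall e, w e ==> w' e) -> F w <= F w'.

Definition local_to (s : seq E) (F : cfg -> R) : Prop :=
  forall w x : cfg, (forall f, f \in s -> w f = x f) -> F w = F x.

Lemma set_edge_eq w e b : set_edge w e b e = b.
Proof. by rewrite ffunE eqxx. Qed.

Lemma set_edge_neq w e b f : f != e -> set_edge w e b f = w f.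
Proof. by rewrite ffunE => /negbTE ->. Qed.

Lemma set_edge_id w e : set_edge w e (w e) = w.
Proof. by apply/ffunP => f; rewrite ffunE; case: eqP => // ->. Qed.

Lemma set_edgeC w e f b c : f != e ->
  set_edge (set_edge w e b) f c = set_edge (set_edge w f c) e b.
Proof.
move=> fe; apply/ffunP => g; rewrite !ffunE.
by case: (eqVneq g f) => [->|//]; rewrite (negbTE fe).
Qed.

Lemma set_edge_le w w' e b : (forall f, w f ==> w' f) ->
  forall f, set_edge w e b f ==> set_edge w' e b f.
Proof. by move=> le_ww' f; rewrite !ffunE; case: (f == e); rewrite ?implybb. Qed.

Lemma agree_off_notin s w x f : agree_off s w x -> f \notin s -> x f = w f.
Proof. by move=> /forallP /(_ f) /implyP H /H /eqP ->. Qed.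

Lemma agree_off_nil w x : agree_off [::] w x = (x == w).
Proof.
apply/forallP/eqP => [H|->]; last by move=> f; rewrite eqxx implybT.
by apply/ffunP => f; have := H f; rewrite in_nil /= => /eqP.
Qed.

Lemma agree_off_set_edge s w x e b :
  agree_off (e :: s) w x -> agree_off s (set_edge w e b) (set_edge x e b).
Proof.
move=> H; apply/forallP => f; apply/implyP => fs; rewrite !ffunE.
case: (eqVneq f e) => [//|fe].
by rewrite (agree_off_notin H) // in_cons negb_or fe.
Qed.

Lemma agree_off_set_edge_in s w x f b :
  f \in s -> agree_off s w (set_edge x f b) = agree_off s w x.
Proof.
move=> fs; apply: eq_forallb => g; rewrite ffunE.
by case: (eqVneq g f) => [->|//]; rewrite fs.
Qed.

Lemma agree_off_cons s w x e b : e \notin s ->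
  agree_off (e :: s) w x && (x e == b) = agree_off s (set_edge w e b) x.
Proof.
move=> es; apply/andP/forallP => [[H /eqP xe] f | H].
- apply/implyP => fs; rewrite ffunE.
  case: (eqVneq f e) => [->|fe]; first by rewrite xe.
  by rewrite (agree_off_notin H) // in_cons negb_or fe.
- split; last by have := implyP (H e) es; rewrite set_edge_eq eq_sym.
  apply/forallP => f; apply/implyP; rewrite in_cons negb_or => /andP [fe fs].
  by have := implyP (H f) fs; rewrite set_edge_neq.
Qed.

Lemma sum_agree_off_split s w e (G : cfg -> R) : e \notin s ->
  \sum_(x | agree_off (e :: s) w x) G x =
  \sum_(x | agree_off s (set_edge w e true) x) G x
    + \sum_(x | agree_off s (set_edge w e false) x) G x.
Proof.
move=> es; rewrite (bigID (fun x : cfg => x e)) /=.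
congr (_ + _); apply: eq_bigl => x.
- by rewrite -(agree_off_cons _ _ _ es) eqb_id.
- by rewrite -(agree_off_cons _ _ _ es) eqbF_neg.
Qed.

Lemma sum_agree_off_shift s w e b (G : cfg -> R) : e \notin s ->
  \sum_(x | agree_off s (set_edge w e b) x) G x =
  \sum_(x | agree_off s w x) G (set_edge x e b).
Proof.
move=> es.
pose h (x : cfg) : cfg := [ffun f => if f == e then x f (+) (w e (+) b) else x f].
have hK : involutive h.
  by move=> x; apply/ffunP=> f; rewrite !ffunE; case: eqP => // _; rewrite addbK.
rewrite (reindex_inj (inv_inj hK)); apply: eq_big => x.
- apply: eq_forallb => f; rewrite !ffunE.
  case: (eqVneq f e) => [->|_] //; rewrite es /=.
  by clear hK h; case: (x e); case: (w e); case: b.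
- move=> Hx; congr (G _); apply/ffunP => f; rewrite !ffunE.
  case: (eqVneq f e) => [->|//].
  by have := agree_off_notin Hx es; rewrite !ffunE !eqxx.
Qed.

Lemma sum_agree_off_cons s w e (G : cfg -> R) : e \notin s ->
  \sum_(x | agree_off (e :: s) w x) G x =
  \sum_(x | agree_off s w x) marginal G e x.
Proof. by move=> es; rewrite sum_agree_off_split // !sum_agree_off_shift // big_split. Qed.

Lemma resample_agree_off r s F w x : agree_off s w x -> resample r s F w = resample r s F x.
Proof.
elim: s w x => [|e s IH] w x /=; first by rewrite agree_off_nil => /eqP ->.
move=> H; rewrite (IH _ _ (agree_off_set_edge true H)).
by rewrite (IH _ _ (agree_off_set_edge false H)).
Qed.

Lemma resample_cat r s t F w :
  resample r (s ++ t) F w = resample r s (resample r t F) w.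
Proof. by elim: s w => [|e s IH] w //=; rewrite !IH. Qed.

Lemma resample_local r s t F : local_to t F -> local_to t (resample r s F).
Proof.
move=> locF; elim: s => [|e s IH] w x wx //=; first exact: locF.
have wx_e b f : f \in t -> set_edge w e b f = set_edge x e b f.
  by move=> ft; rewrite !ffunE; case: (f == e); last exact: wx.
by rewrite (IH _ _ (wx_e true)) (IH _ _ (wx_e false)).
Qed.

Lemma resample_monotone r s F :
  (forall e, 0 <= r e <= 1) -> monotone F -> monotone (resample r s F).
Proof.
move=> r01 monoF; elim: s => [|e s IH] w w' le_ww' //=; first exact: monoF.
have /andP [r0 r1] := r01 e.
by apply: lerD; apply: ler_wpM2l; rewrite ?subr_ge0 //; apply: IH; apply: set_edge_le.
Qed.

Lemma resample_bounds r s F w : (forall e, 0 <= r e <= 1) ->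
  (forall x, 0 <= F x <= 1) -> 0 <= resample r s F w <= 1.
Proof.
move=> r01 F01; elim: s w => [|e s IH] w //=.
have /andP [r0 r1] := r01 e.
have /andP [a0 a1] := IH (set_edge w e true).
have /andP [b0 b1] := IH (set_edge w e false).
by apply/andP; split; nra.
Qed.

Lemma resample_explicit r s F w : uniq s ->
  resample r s F w =
  \sum_(x | agree_off s w x) (\prod_(f <- s) edge_factor r f (x f)) * F x.
Proof.
elim: s w => [|e s IH] w /=.
  by move=> _; rewrite (big_pred1 w) ?big_nil ?mul1r // => x; rewrite agree_off_nil.
case/andP => es us; rewrite sum_agree_off_split // !IH // !big_distrr /=.
congr (_ + _); apply: eq_bigr => x Hx;
  by rewrite big_cons (agree_off_notin Hx es) set_edge_eq mulrA.
Qed.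

Lemma resample_enum r s F w : uniq s -> (forall f, f \in s) ->
  resample r s F w = expectation r F.
Proof.
move=> us alls; rewrite resample_explicit //; apply: eq_big => x.
  by apply/forallP => f; rewrite alls.
by move=> _; rewrite big_uniq //; congr (_ * _); apply: eq_bigl => f; rewrite alls.
Qed.

Lemma resample_expectation r s F w : uniq s -> local_to s F ->
  resample r s F w = expectation r F.
Proof.
move=> us locF; pose b := [seq f <- enum E | f \notin s].
have ubs : uniq (b ++ s).
  rewrite cat_uniq us filter_uniq ?enum_uniq //= andbT.
  by apply/hasPn => f fs; rewrite mem_filter fs.
rewrite -(resample_enum r F w ubs); last first.
  by move=> f; rewrite mem_cat mem_filter mem_enum andbT; case: (f \in s).
suff [a resample_const] : exists a, forall x, resample r s F x = a.
  rewrite resample_cat resample_const; symmetry.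
  by elim: b {ubs} w => [|e b IH] w /=; rewrite ?resample_const // !IH; ring.
exists (resample r s F w) => x.
pose y : cfg := [ffun f => if f \in s then w f else x f].
rewrite (@resample_agree_off r s F x y); last first.
  by apply/forallP => f; apply/implyP => fs; rewrite ffunE (negbTE fs).
by apply: (resample_local r s locF) => f fs; rewrite ffunE fs.
Qed.

Lemma sum_resample_enum (W : cfg -> R) r s F : uniq s -> (forall f, f \in s) ->
  \sum_w W w * resample r s F w = expectation r F * \sum_w W w.
Proof.
by move=> us alls; rewrite mulr_sumr; apply: eq_bigr => w _; rewrite resample_enum // mulrC.
Qed.

Lemma sum_indicator (A : {set cfg}) (G : cfg -> R) :
  \sum_(w in A) G w = \sum_w G w * indicator A w.
Proof.
rewrite big_mkcond; apply: eq_bigr => w _.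
by rewrite /indicator; case: (w \in A); rewrite ?mulr1 ?mulr0.
Qed.

Lemma prodP_indicator (r : E -> R) (A : {set cfg}) :
  prodP r A = expectation r (indicator A).
Proof.
rewrite /prodP big_mkcond; apply: eq_bigr => x _.
by rewrite /indicator; case: (x \in A); rewrite ?mulr1 ?mulr0.
Qed.

Lemma prodP_ext (r1 r2 : E -> R) (A : {set cfg}) :
  r1 =1 r2 -> prodP r1 A = prodP r2 A.
Proof. by move=> r12; apply: eq_bigr => x _; apply: eq_bigr => e _; rewrite r12. Qed.

Lemma prodP_bounds (r : E -> R) (A : {set cfg}) :
  (forall e, 0 <= r e <= 1) -> 0 <= prodP r A <= 1.
Proof.
move=> r01; rewrite prodP_indicator.
rewrite -(resample_enum r _ [ffun=> false] (enum_uniq E)); last exact: mem_enum.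
by apply: resample_bounds => // x; rewrite /indicator; case: (x \in A); rewrite ?ler01 ?lexx.
Qed.

Lemma indicator_monotone (A : {set cfg}) :
  increasing A -> monotone (indicator A).
Proof.
move=> incA w w' le_ww'; rewrite /indicator.
case: (boolP (w \in A)) => wA; first by rewrite (incA w w' wA le_ww').
by case: (w' \in A); rewrite ?ler01 ?lexx.
Qed.

Definition clear_on s w : cfg := [ffun f => if f \in s then false else w f].

Lemma agree_off_clear_on s w x : agree_off s w x = (clear_on s w == clear_on s x).
Proof.
apply/forallP/eqP => [H | H].
- apply/ffunP => f; rewrite !ffunE; case: ifP => // /negbT fs.
  exact: (eqP (implyP (H f) fs)).
- move=> f; apply/implyP => fs; move/ffunP: H => /(_ f).
  by rewrite !ffunE (negbTE fs) => ->.
Qed.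

Lemma clear_on_id s w : clear_on s (clear_on s w) = clear_on s w.
Proof. by apply/ffunP => f; rewrite !ffunE; case: (f \in s). Qed.

Lemma sum_fiberwise_le0 s (D K : cfg -> R) : (forall w, 0 <= D w) ->
  (forall w x, agree_off s w x -> D w = D x) ->
  (forall w, \sum_(x | agree_off s w x) K x <= 0) -> \sum_w D w * K w <= 0.
Proof.
move=> D0 Dfib Kfib; rewrite (partition_big (clear_on s) predT) //=.
apply: sumr_le0 => j _; case: (boolP (clear_on s j == j)) => [/eqP cj | cj].
- have -> : \sum_(w | clear_on s w == j) D w * K w = D j * \sum_(w | agree_off s j w) K w.
    rewrite mulr_sumr; apply: eq_big => w; first by rewrite agree_off_clear_on cj eq_sym.
    by move=> /eqP cw; rewrite (Dfib j w) // agree_off_clear_on cw cj.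
  exact: mulr_ge0_le0.
- rewrite big_pred0 // => w; apply/negbTE/eqP => cw.
  by move: cj; rewrite -cw clear_on_id eqxx.
Qed.

(* [open_le W rho s e]: under the weights [W], the conditional probability that
   [e] is open, given the edges outside [e :: s], is at most [rho]. *)
Definition open_le (W : cfg -> R) (rho : R) s e : Prop := forall w,
  \sum_(x | agree_off s w x) W (set_edge x e true) <=
  rho * \sum_(x | agree_off s w x) marginal W e x.

Definition open_ge (W : cfg -> R) (rho : R) s e : Prop := forall w,
  rho * \sum_(x | agree_off s w x) marginal W e x <=
  \sum_(x | agree_off s w x) W (set_edge x e true).

Lemma open_le_pointwise (W : cfg -> R) rho s e :
  (forall x, W (set_edge x e true) <= rho * marginal W e x) ->
  open_le W rho s e.
Proof. by move=> H w; rewrite mulr_sumr; apply: ler_sum => x _; apply: H. Qed.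

Lemma open_ge_pointwise (W : cfg -> R) rho s e :
  (forall x, rho * marginal W e x <= W (set_edge x e true)) ->
  open_ge W rho s e.
Proof. by move=> H w; rewrite mulr_sumr; apply: ler_sum => x _; apply: H. Qed.

Lemma resample_cons_diff (W : cfg -> R) r s e F :
  \sum_w W w * resample r s F w - \sum_w W w * resample r (e :: s) F w =
  \sum_w (resample r s F (set_edge w e true) - resample r s F (set_edge w e false))
          * (W w * ((w e)%:R - r e)).
Proof.
rewrite -sumrB; apply: eq_bigr => w _ /=.
have -> : resample r s F w = resample r s F (set_edge w e (w e)) by rewrite set_edge_id.
by case: (w e) => /=; ring.
Qed.

Lemma sum_agree_off_open (W : cfg -> R) rho s e w : e \notin s ->
  \sum_(x | agree_off (e :: s) w x) W x * ((x e)%:R - rho) =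
  \sum_(x | agree_off s w x) W (set_edge x e true)
    - rho * \sum_(x | agree_off s w x) marginal W e x.
Proof.
move=> es; rewrite sum_agree_off_cons // mulr_sumr -sumrB.
by apply: eq_bigr => x _; rewrite /marginal !set_edge_eq /=; ring.
Qed.

Section Increment.
Variables (r : E -> R) (s : seq E) (e : E) (F : cfg -> R).
Hypotheses (r01 : forall f, 0 <= r f <= 1) (monoF : monotone F).

Lemma resample_increment_ge0 w :
  0 <= resample r s F (set_edge w e true) - resample r s F (set_edge w e false).
Proof.
rewrite subr_ge0; apply: resample_monotone => // f; rewrite !ffunE.
by case: eqP => // _; case: (w f).
Qed.

Lemma resample_increment_agree_off w x : agree_off (e :: s) w x ->
  resample r s F (set_edge w e true) - resample r s F (set_edge w e false) =
  resample r s F (set_edge x e true) - resample r s F (set_edge x e false).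
Proof.
move=> H; rewrite (resample_agree_off r F (agree_off_set_edge true H)).
by rewrite (resample_agree_off r F (agree_off_set_edge false H)).
Qed.

End Increment.

(* Sequential coupling: resampling the edges of [s] one after the other, each
   step moves mass upwards because [e] is conditionally less likely to be open
   under [W] than under the product measure. *)
Theorem sum_le_resample (W : cfg -> R) r s F : (forall e, 0 <= r e <= 1) ->
  uniq s -> monotone F -> (forall e t, suffix (e :: t) s -> open_le W (r e) t e) ->
  \sum_w W w * F w <= \sum_w W w * resample r s F w.
Proof.
move=> r01; elim: s => [|e s IH] //= /andP [es us] monoF cond.
apply: le_trans (IH us monoF _) _ => [f t sfx|].
  exact: cond (suffix_trans sfx (suffix_cons _ _)).
rewrite -subr_le0 resample_cons_diff.
apply: (sum_fiberwise_le0 (s := e :: s)) => [w|w x|w].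
- exact: resample_increment_ge0.
- exact: resample_increment_agree_off.
- by rewrite sum_agree_off_open // subr_le0; apply: (cond e s (suffix_refl _)).
Qed.

Theorem sum_resample_le (W : cfg -> R) r s F : (forall e, 0 <= r e <= 1) ->
  uniq s -> monotone F -> (forall e t, suffix (e :: t) s -> open_ge W (r e) t e) ->
  \sum_w W w * resample r s F w <= \sum_w W w * F w.
Proof.
move=> r01; elim: s => [|e s IH] //= /andP [es us] monoF cond.
apply: le_trans _ (IH us monoF _) => [|f t sfx]; last first.
  exact: cond (suffix_trans sfx (suffix_cons _ _)).
rewrite -subr_le0 -opprB resample_cons_diff -sumrN.
under eq_bigr do rewrite -mulrN.
apply: (sum_fiberwise_le0 (s := e :: s)) => [w|w x|w].
- exact: resample_increment_ge0.
- exact: resample_increment_agree_off.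
- rewrite sumrN sum_agree_off_open // oppr_le0 subr_ge0.
  exact: (cond e s (suffix_refl _)).
Qed.

Lemma expectation_le_conditional (V F : cfg -> R) (m : R) s w :
  0 <= m <= 1 -> uniq s -> monotone F -> local_to s F ->
  (forall f x, f \in s ->
     m * marginal V f x <= V (set_edge x f true)) ->
  expectation (fun _ => m) F * \sum_(x | agree_off s w x) V x <=
  \sum_(x | agree_off s w x) F x * V x.
Proof.
move=> m01 us monoF locF lbV.
pose Vw x := (agree_off s w x)%:R * V x.
have sum_Vw G : \sum_x Vw x * G x = \sum_(x | agree_off s w x) G x * V x.
  rewrite [RHS]big_mkcond; apply: eq_bigr => x _; rewrite /Vw.
  by case: (agree_off s w x); rewrite /= ?mul1r ?mul0r // mulrC.
have condVw f t : suffix (f :: t) s -> open_ge Vw m t f.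
  move=> sfx; have fs : f \in s := mem_subseq (infixW (suffixW sfx)) (mem_head f t).
  apply: open_ge_pointwise => x; rewrite /marginal /Vw !agree_off_set_edge_in //.
  by case: (agree_off s w x); rewrite /= ?mul1r ?mul0r ?addr0 ?mulr0 //; apply: (lbV f x fs).
have := sum_resample_le (fun=> m01) us monoF condVw; rewrite sum_Vw.
under eq_bigr do rewrite (resample_expectation _ _ us locF).
by rewrite sum_Vw -mulr_sumr.
Qed.

End Resampling.

Arguments indicator {E R} A x.

(** * Open clusters *)

Section OpenClusters.
Variables (V E : finType) (ends : E -> V * V) (alpha : {set {set V}}).
Local Notation cfg := {ffun E -> bool}.
Local Notation orel := (open_rel ends alpha).
Local Notation k := (kcomp ends alpha).
Implicit Types (w : cfg) (e f : E) (x y : V).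

Lemma wired_sym x y : wired alpha x y = wired alpha y x.
Proof.
by apply/existsP/existsP => -[A HA]; exists A; move: HA; rewrite [(_ \in A) && _]andbC.
Qed.

Lemma open_rel_sym w : symmetric (orel w).
Proof.
move=> x y; rewrite /open_rel wired_sym; congr (_ || _); apply: eq_existsb => e.
by rewrite /joins orbC.
Qed.

Lemma open_rel_subrel w e : subrel (orel (set_edge w e false)) (orel (set_edge w e true)).
Proof.
move=> x y /orP [/existsP [f /andP [wf jf]] | wd]; apply/orP; last by right.
by left; apply/existsP; exists f; rewrite jf andbT; move: wf; rewrite !ffunE; case: (f == e).
Qed.

Lemma open_rel_adds_edge w e :
  adds_edge (orel (set_edge w e false)) (orel (set_edge w e true)) (ends e).1 (ends e).2.
Proof.
move=> x y /orP [/existsP [f /andP [wf jf]] | wd]; last by rewrite /open_rel wd orbT.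
case: (eqVneq f e) => [<-|fe].
- by move: jf; rewrite /joins => /orP [] /andP [/eqP -> /eqP ->]; rewrite !eqxx ?orbT.
- apply/orP; left; apply/orP; left; apply/existsP; exists f; rewrite jf andbT.
  by move: wf; rewrite !set_edge_neq.
Qed.

Lemma kcomp_set_edge_cases w e :
  k (set_edge w e false) = k (set_edge w e true) \/
  k (set_edge w e false) = (k (set_edge w e true)).+1.
Proof.
have le1 : (k (set_edge w e true) <= k (set_edge w e false))%N.
  exact/ncomp_subrel/open_rel_subrel.
have le2 : (k (set_edge w e false) <= (k (set_edge w e true)).+1)%N.
  exact: ncomp_adds_edge (@open_rel_sym _) (@open_rel_subrel _ _) (@open_rel_adds_edge _ _).
move: le2; rewrite leq_eqVlt ltnS => /orP [/eqP ->|le2]; [by right | left].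
by apply/eqP; rewrite eqn_leq le1 le2.
Qed.

Lemma kcomp_set_edge_connect w e :
  connect (orel (set_edge w e false)) (ends e).1 (ends e).2 ->
  k (set_edge w e false) = k (set_edge w e true).
Proof.
move=> cab; apply: ncomp_eq => x y; apply/idP/idP.
- by apply: connect_sub => u v H; apply: connect1; apply: open_rel_subrel.
- apply: connect_sub => u v /open_rel_adds_edge /or3P
    [H|/andP [/eqP -> /eqP ->]|/andP [/eqP -> /eqP ->]] //; first exact: connect1.
  by rewrite (sym_connect_sym (@open_rel_sym _)).
Qed.

Lemma walk_connect w x y s : walk ends alpha x y s -> all (fun f => w f) s ->
  connect (orel w) x y.
Proof.
have same u v : same_vertex alpha u v -> connect (orel w) u v.
  move=> /orP [/eqP ->|wd]; first exact: connect0.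
  by apply: connect1; rewrite /open_rel wd orbT.
have step f : w f -> connect (orel w) (ends f).1 (ends f).2 /\ connect (orel w) (ends f).2 (ends f).1.
  by move=> wf; split; apply: connect1; apply/orP; left; apply/existsP; exists f;
    rewrite wf /joins !eqxx ?orbT.
elim: s x => [|f s IH] x /=; first by move=> H _; exact: same.
move=> H /andP [/step [c12 c21] allw].
by case/orP: H => /andP [/same c /IH c' ]; apply: connect_trans c _;
  [apply: connect_trans c12 _ | apply: connect_trans c21 _]; apply: c'.
Qed.

Variable Et : {set E}.
Local Notation A e := (Gamma_open_event ends alpha Et e).

Lemma Gamma_open_event_monotone e w w' : (forall f, f \notin Et -> w f ==> w' f) ->
  w \in A e -> w' \in A e.
Proof.
move=> le_ww'; rewrite !inE => /existsP [n /existsP [t /and3P [ut Gt allw]]].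
apply/existsP; exists n; apply/existsP; exists t; rewrite ut Gt /=.
move: Gt => /andP [_ /allP notEt].
apply/allP => f ft; exact: implyP (le_ww' f (notEt f ft)) (allP allw f ft).
Qed.

Lemma Gamma_open_event_increasing e : increasing (A e).
Proof. by move=> w w' wA le_ww'; apply: Gamma_open_event_monotone wA => f _; apply: le_ww'. Qed.

Lemma Gamma_open_event_local (R : realFieldType) e t :
  (forall f, f \notin Et -> f \in t) -> local_to t (indicator (R := R) (A e)).
Proof.
move=> cov w w' ww'; rewrite /indicator.
suff eqA : (w \in A e) = (w' \in A e) by rewrite eqA.
by apply/idP/idP; apply: Gamma_open_event_monotone => f /cov ft; rewrite (ww' f ft) implybb.
Qed.

Lemma Gamma_open_connect e w : e \in Et -> w \in A e ->
  connect (orel (set_edge w e false)) (ends e).1 (ends e).2.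
Proof.
move=> eEt; rewrite inE => /existsP [n /existsP [t /and3P [_ /andP [wk /allP notEt] allw]]].
apply: walk_connect wk _; apply/allP => f ft.
have fe : f != e by apply: contraNneq (notEt f ft) => ->.
by rewrite set_edge_neq // (allP allw f ft).
Qed.

End OpenClusters.

(** * Conditional law of one edge under the FK measure *)

Section FKWeights.
Variables (V E : finType) (ends : E -> V * V) (alpha : {set {set V}}).
Variables (R : realFieldType) (p q : R).
Hypotheses (p0 : 0 <= p) (p1 : p <= 1) (q0 : 0 < q).
Local Notation cfg := {ffun E -> bool}.
Local Notation W := (FK_weight ends alpha p q).
Local Notation k := (kcomp ends alpha).
Local Notation pp := (pprime p q).
Implicit Types (w : cfg) (e : E).

Lemma pprime_denom_gt0 : 0 < p + q * (1 - p).
Proof.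
case: (eqVneq p 1) => [->|pn1]; first by rewrite subrr mulr0 addr0 ltr01.
have h : 0 < q * (1 - p) by apply: mulr_gt0 => //; rewrite subr_gt0 lt_neqAle pn1 p1.
exact: ltr_wpDl p0 h.
Qed.

Lemma pprime_bounds : 0 <= pp <= 1.
Proof.
have D := pprime_denom_gt0; rewrite /pprime divr_ge0 ?(ltW D) //=.
by rewrite ler_pdivrMr // mul1r lerDl mulr_ge0 ?(ltW q0) ?subr_ge0.
Qed.

Lemma FK_weight_ge0 w : 0 <= W w.
Proof.
rewrite /FK_weight mulr_ge0 ?exprn_ge0 ?(ltW q0) //.
by apply: prodr_ge0 => f _; case: (w f); rewrite ?subr_ge0.
Qed.

Lemma FK_weight_sum_gt0 : 0 < \sum_w W w.
Proof.
pose w0 : cfg := [ffun=> p == 1].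
have W0 : 0 < W w0.
  rewrite /FK_weight mulr_gt0 ?exprn_gt0 //; apply: prodr_gt0 => f _; rewrite ffunE.
  by case: eqP => [->|/eqP pn1]; rewrite ?ltr01 // subr_gt0 lt_neqAle pn1 p1.
rewrite (bigD1 w0) //=; apply: (lt_le_trans W0); rewrite lerDl.
by apply: sumr_ge0 => w _; apply: FK_weight_ge0.
Qed.

Lemma FK_weight_set_edge w e b : W (set_edge w e b) =
  (if b then p else 1 - p) * \prod_(f | f != e) (if w f then p else 1 - p)
    * q ^+ k (set_edge w e b).
Proof.
rewrite /FK_weight /edge_weight (bigD1 e) //= set_edge_eq; congr (_ * _ * _).
by apply: eq_bigr => f fe; rewrite set_edge_neq.
Qed.

Lemma FK_open_connect w e :
  connect (open_rel ends alpha (set_edge w e false)) (ends e).1 (ends e).2 ->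
  W (set_edge w e true) = p * marginal W e w.
Proof.
move=> c; rewrite /marginal !FK_weight_set_edge (kcomp_set_edge_connect c) /=.
by move: (\prod_(f | f != e) _) (q ^+ _) => X Q; ring.
Qed.

(* Closing [e] either keeps the number of clusters or adds one, so the
   conditional probability that [e] is open is [p] or [pprime p q]. *)
Lemma FK_open_cases w e :
  W (set_edge w e true) = p * marginal W e w \/ W (set_edge w e true) = pp * marginal W e w.
Proof.
rewrite /marginal !FK_weight_set_edge /=.
have D := lt0r_neq0 pprime_denom_gt0.
case: (kcomp_set_edge_cases ends alpha w e) => ->; [left | right; rewrite exprS /pprime];
  by move: (\prod_(f | f != e) _) (q ^+ _) => X Q; field.
Qed.

Lemma FK_open_between w e :
  Num.min p pp * marginal W e w <= W (set_edge w e true) <= Num.max p pp * marginal W e w.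
Proof.
have T0 : 0 <= marginal W e w by rewrite addr_ge0 ?FK_weight_ge0.
by case: (FK_open_cases w e) => ->; rewrite !ler_wpM2r ?ge_min ?le_max ?lexx ?orbT.
Qed.

End FKWeights.

(** * Comparison with product measures *)

Lemma suffix_cat_subset (T : eqType) (a b t : seq T) (x : T) :
  suffix (x :: t) (a ++ b) -> x \notin b -> {subset b <= t}.
Proof.
case/suffixP => u; elim: a u => [|y a IH] [|z u] /=.
- by move=> ->; rewrite mem_head.
- by move=> ->; rewrite in_cons mem_cat mem_head !orbT.
- by case=> _ <- _ f fb; rewrite mem_cat fb orbT.
- by case=> _ /IH.
Qed.

Section EnumSplit.
Variables (T : finType) (X : {set T}).

Lemma uniq_enum_setC : uniq (enum X ++ enum (~: X)).
Proof.
rewrite cat_uniq !enum_uniq /= andbT.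
by apply/hasPn => y; rewrite !mem_enum inE.
Qed.

Lemma mem_enum_setC y : y \in enum X ++ enum (~: X).
Proof. by rewrite mem_cat !mem_enum inE orbN. Qed.

Lemma suffix_enum_setC x t : suffix (x :: t) (enum X ++ enum (~: X)) -> x \in X ->
  [/\ x \notin t, uniq t & forall y, y \notin X -> y \in t].
Proof.
move=> sfx xX; have /andP [xt ut] := suffix_uniq sfx uniq_enum_setC.
split=> // y yX; apply: (suffix_cat_subset sfx); rewrite mem_enum ?inE //.
by apply: contraNN yX => /negPn.
Qed.

End EnumSplit.

Section Comparison.
Variables (V E : finType) (ends : E -> V * V) (alpha : {set {set V}}).
Variables (R : realFieldType) (p q : R) (Et : {set E}).
Hypotheses (p0 : 0 <= p) (p1 : p <= 1) (q0 : 0 < q).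
Local Notation cfg := {ffun E -> bool}.
Local Notation W := (FK_weight ends alpha p q).
Local Notation pp := (pprime p q).
Local Notation A e := (Gamma_open_event ends alpha Et e).

Definition Gamma_prob (e : E) : R := prodP (fun=> Num.min p pp) (A e).

Definition rate (e : E) : R :=
  if e \in Et then Gamma_prob e * p + (1 - Gamma_prob e) * pp else pp.

Lemma min_pprime_bounds : 0 <= Num.min p pp <= 1.
Proof.
have /andP [pp0 _] := pprime_bounds p0 p1 q0.
by rewrite le_min ge_min p0 pp0 p1.
Qed.

Lemma rate_bounds e : 0 <= rate e <= 1.
Proof.
have /andP [pp0 pp1] := pprime_bounds p0 p1 q0.
rewrite /rate; case: ifP => _; rewrite ?pp0 ?pp1 //.
have /andP [P0 P1] := prodP_bounds (A e) (fun=> min_pprime_bounds).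
rewrite /Gamma_prob; move: (prodP _ _) P0 P1 => P P0 P1.
have a : 0 <= P * p by rewrite mulr_ge0.
have b : 0 <= (1 - P) * pp by rewrite mulr_ge0 ?subr_ge0.
have c : 0 <= P * (1 - p) by rewrite mulr_ge0 ?subr_ge0.
have d : 0 <= (1 - P) * (1 - pp) by rewrite mulr_ge0 ?subr_ge0.
by apply/andP; split; lra.
Qed.

Lemma Gamma_prob_le_conditional e t w : e \in Et -> e \notin t -> uniq t ->
  (forall f, f \notin Et -> f \in t) ->
  Gamma_prob e * \sum_(x | agree_off t w x) marginal W e x <=
  \sum_(x | agree_off t w x) indicator (A e) x * marginal W e x.
Proof.
move=> eEt et ut cov; rewrite /Gamma_prob prodP_indicator.
apply: expectation_le_conditional => //.
- exact: min_pprime_bounds.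
- exact/indicator_monotone/Gamma_open_event_increasing.
- exact: Gamma_open_event_local.
move=> f x ft; have ef : e != f by apply: contraNneq et => ->.
rewrite /marginal !(set_edgeC _ _ _ ef).
have /andP [h1 _] := FK_open_between ends alpha p0 p1 q0 (set_edge x e true) f.
have /andP [h2 _] := FK_open_between ends alpha p0 p1 q0 (set_edge x e false) f.
by rewrite /marginal in h1 h2; apply: le_trans _ (lerD h1 h2); rewrite -mulrDr addrACA.
Qed.

(* On [A e] the endpoints of [e] are already connected, so there [e] is open
   with conditional probability exactly [p]. *)
Lemma open_le_rate e t : p <= pp ->
  (e \in Et -> [/\ e \notin t, uniq t & forall f, f \notin Et -> f \in t]) ->
  open_le W (rate e) t e.
Proof.
move=> le_p_pp split_t; rewrite /rate.
have open_le_pp x : W (set_edge x e true) <= pp * marginal W e x.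
  by have /andP [_] := FK_open_between ends alpha p0 p1 q0 x e; rewrite max_r.
case: ifP => eEt; last exact: open_le_pointwise.
have [et ut cov] := split_t eEt.
have bound x : W (set_edge x e true) <=
    pp * marginal W e x - (pp - p) * (indicator (A e) x * marginal W e x).
  rewrite /indicator; case: (boolP (x \in A e)) => xA /=; last by rewrite mul0r mulr0 subr0.
  rewrite (FK_open_connect p q (Gamma_open_connect eEt xA)).
  by rewrite le_eqVlt; apply/orP; left; apply/eqP; rewrite /marginal; ring.
move=> w; apply: le_trans (ler_sum _ (fun x _ => bound x)) _.
rewrite sumrB -!mulr_sumr; have := Gamma_prob_le_conditional w eEt et ut cov.
move: (Gamma_prob e) (\sum_(x | _) marginal W e x) (\sum_(x | _) _ * _) => P S SA hP.
have : 0 <= (pp - p) * (SA - P * S) by rewrite mulr_ge0 ?subr_ge0.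
by lra.
Qed.

Lemma open_ge_rate e t : pp <= p ->
  (e \in Et -> [/\ e \notin t, uniq t & forall f, f \notin Et -> f \in t]) ->
  open_ge W (rate e) t e.
Proof.
move=> le_pp_p split_t; rewrite /rate.
have open_ge_pp x : pp * marginal W e x <= W (set_edge x e true).
  by have /andP [+ _] := FK_open_between ends alpha p0 p1 q0 x e; rewrite min_r.
case: ifP => eEt; last exact: open_ge_pointwise.
have [et ut cov] := split_t eEt.
have bound x : pp * marginal W e x + (p - pp) * (indicator (A e) x * marginal W e x)
    <= W (set_edge x e true).
  rewrite /indicator; case: (boolP (x \in A e)) => xA /=; last by rewrite mul0r mulr0 addr0.
  rewrite (FK_open_connect p q (Gamma_open_connect eEt xA)).
  by rewrite le_eqVlt; apply/orP; left; apply/eqP; rewrite /marginal; ring.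
move=> w; apply: le_trans _ (ler_sum _ (fun x _ => bound x)).
rewrite [X in _ <= X]big_split -!mulr_sumr /=; have := Gamma_prob_le_conditional w eEt et ut cov.
move: (Gamma_prob e) (\sum_(x | _) marginal W e x) (\sum_(x | _) _ * _) => P S SA hP.
have : 0 <= (p - pp) * (SA - P * S) by rewrite mulr_ge0 ?subr_ge0.
by lra.
Qed.

Lemma FK_dominated_by_rate : p <= pp -> dominated (FK ends alpha p q) (prodP rate).
Proof.
move=> le_p_pp B incB.
rewrite /FK ler_pdivrMr ?FK_weight_sum_gt0 // sum_indicator prodP_indicator.
rewrite -(sum_resample_enum W rate _ (uniq_enum_setC Et) (mem_enum_setC Et)).
apply: sum_le_resample => [|||e t sfx].
- exact: rate_bounds.
- exact: uniq_enum_setC.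
- exact: indicator_monotone.
- exact: open_le_rate le_p_pp (suffix_enum_setC sfx).
Qed.

Lemma rate_dominated_by_FK : pp <= p -> dominated (prodP rate) (FK ends alpha p q).
Proof.
move=> le_pp_p B incB.
rewrite /FK ler_pdivlMr ?FK_weight_sum_gt0 // sum_indicator prodP_indicator.
rewrite -(sum_resample_enum W rate _ (uniq_enum_setC Et) (mem_enum_setC Et)).
apply: sum_resample_le => [|||e t sfx].
- exact: rate_bounds.
- exact: uniq_enum_setC.
- exact: indicator_monotone.
- exact: open_ge_rate le_pp_p (suffix_enum_setC sfx).
Qed.

Lemma rate_sub_eps_tilde : p <= pp ->
  (fun e => pp - (if e \in Et then eps_tilde ends alpha Et p pp e else 0)) =1 rate.
Proof.
move=> le_p_pp e; rewrite /rate /eps_tilde /Gamma_prob; case: ifP => _; last by rewrite subr0.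
by rewrite min_l // ger0_norm ?subr_ge0 //; ring.
Qed.

Lemma rate_add_eps_tilde : pp <= p ->
  (fun e => pp + (if e \in Et then eps_tilde ends alpha Et p pp e else 0)) =1 rate.
Proof.
move=> le_pp_p e; rewrite /rate /eps_tilde /Gamma_prob; case: ifP => _; last by rewrite addr0.
by rewrite min_r // ler0_norm ?subr_le0 //; ring.
Qed.

End Comparison.

Unset Implicit Arguments.

Theorem proposition3p2 (R : realFieldType) (V E : finType) (ends : E -> V * V)
  (dG : {set V}) (alpha : {set {set V}}) (p q : R) (Et : {set E}) :
  graph_connected ends ->
  partition alpha dG ->
  0 <= p <= 1 -> 0 < q ->
  (forall e, e \in Et -> exists s : seq E, in_Gamma ends alpha Et e s) ->
  (p < pprime p q ->
     dominated (FK ends alpha p q)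
       (prodP (fun e => pprime p q -
                 (if e \in Et then eps_tilde ends alpha Et p (pprime p q) e else 0)))) /\
  (pprime p q < p ->
     dominated
       (prodP (fun e => pprime p q +
                 (if e \in Et then eps_tilde ends alpha Et p (pprime p q) e else 0)))
       (FK ends alpha p q)).
Proof.
move=> _ _ /andP [p0 p1] q0 _; split=> [/ltW le_p_pp | /ltW le_pp_p] B incB.
- rewrite (prodP_ext B (rate_sub_eps_tilde ends alpha Et le_p_pp)).
  exact: FK_dominated_by_rate.
- rewrite (prodP_ext B (rate_add_eps_tilde ends alpha Et le_pp_p)).
  exact: rate_dominated_by_FK.
Qed.
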